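(* For each $n\ge 4$, there exist connected graphs $G_1,G_2,G_3$, each of order $n$, such that $O_{\rm SR}(G_1)=\mathcal{M}$, $O_{\rm SR}(G_2)=\mathcal{N}$ and $O_{\rm SR}(G_3)=\mathcal{B}$.
   Context: All graphs are finite, simple and undirected. A set $S\subseteq V(G)$ is a strong resolving set of a connected graph $G$ if for all distinct $x,y\in V(G)$ there exists $z\in S$ such that $x$ lies on a $y$–$z$ geodesic or $y$ lies on an $x$–$z$ geodesic. The Maker–Breaker strong resolving game on $G$: Maker and Breaker alternately select a not-yet-chosen vertex of $G$; Maker wins if the vertices he selects contain a strong resolving set of $G$, Breaker wins otherwise. In the M-game Maker moves first, in the B-game Breaker moves first. $O_{\rm SR}(G)=\mathcal{M}$ if Maker has a winning strategy in both games, $\mathcal{B}$ if Breaker has a winning strategy in both, and $\mathcal{N}$ if the first player has a winning strategy in each. *)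

From mathcomp Require Import all_boot.
Set Implicit Arguments. Unset Strict Implicit. Unset Printing Implicit Defensive.

Section Graphs.
Variable T : finType.
Variable e : rel T.

Definition simple_graph : Prop := symmetric e /\ irreflexive e.

Definition connected_graph : Prop := forall x y : T, connect e x y.

Definition walk_of_length (k : nat) (x y : T) : bool :=
  [exists t : k.-tuple T, path e x t && (last x t == y)].

(* graph distance: least k (< #|T|) admitting a walk of length k;
   correct for connected graphs (shortest paths have fewer than #|T| edges) *)
Definition dist (x y : T) : nat :=
  find (fun k => walk_of_length k x y) (iota 0 #|T|).

Definition on_geodesic (y z x : T) : bool := dist y x + dist x z == dist y z.

Definition strong_resolving (S : {set T}) : bool :=
  [forall x, forall y, (x != y) ==>
     [exists z in S, on_geodesic y z x || on_geodesic x z y]].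

Definition maker_set_wins (M : {set T}) : bool :=
  [exists S : {set T}, (S \subset M) && strong_resolving S].

(* Maker--Breaker game value: M = Maker's vertices, B = Breaker's vertices,
   mturn = true iff it is Maker's turn. Play continues until all vertices are
   chosen; k is fuel (#|T| suffices). *)
Fixpoint maker_wins (k : nat) (M B : {set T}) (mturn : bool) : bool :=
  match k with
  | 0 => maker_set_wins M
  | k'.+1 =>
    let F := ~: (M :|: B) in
    if F == set0 then maker_set_wins M
    else if mturn then [exists v in F, maker_wins k' (v |: M) B false]
    else [forall v in F, maker_wins k' M (v |: B) true]
  end.

(* M-game: Maker starts; B-game: Breaker starts *)
Definition maker_wins_Mgame : bool := maker_wins #|T| set0 set0 true.
Definition maker_wins_Bgame : bool := maker_wins #|T| set0 set0 false.

End Graphs.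

Inductive outcome := OutM | OutN | OutB | OutP.

Definition O_SR (T : finType) (e : rel T) : outcome :=
  match maker_wins_Mgame e, maker_wins_Bgame e with
  | true, true => OutM
  | false, false => OutB
  | true, false => OutN
  | false, true => OutP
  end.

From Pilot Require Import Defs.
From mathcomp Require Import all_boot zify.
Set Implicit Arguments. Unset Strict Implicit. Unset Printing Implicit Defensive.

(* A strong resolving set contains a vertex of every pair {x, y} such that no
   third vertex z has x on a y--z geodesic or y on an x--z geodesic, so Breaker
   wins once he owns such a pair; all three games are then decided by pairing
   strategies.  On the path an end vertex alone is a strong resolving set and
   Maker always gets one of the two ends.  In K_n every pair is of that kind,
   and after his first move Breaker can always claim one of two free vertices.
   On the broom, the end of the handle together with either of the two leaves
   is such a pair and also a strong resolving set, so whoever claims the end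
   of the handle first wins by pairing the two leaves. *)

Section Walks.
Variables (T : finType) (e : rel T).
Local Notation walk := (walk_of_length e).
Local Notation dist := (dist e).

Lemma walk0 x y : walk 0 x y = (x == y).
Proof.
apply/existsP/eqP => [[t /andP[_ /eqP <-]]|<-]; first by case: t => -[].
by exists [tuple]; rewrite /= eqxx.
Qed.

Lemma walkS k x y : walk k.+1 x y = [exists z, e x z && walk k z y].
Proof.
apply/existsP/existsP => [[t]|[z /andP[exz /existsP[t /andP[pt lt]]]]].
  case/tupleP: t => z t /= /andP[/andP[exz pt] lt].
  by exists z; rewrite exz; apply/existsP; exists t; rewrite pt.
by exists [tuple of z :: t]; rewrite /= exz pt.
Qed.

Lemma walk1 x y : walk 1 x y = e x y.
Proof.
rewrite walkS; apply/existsP/idP => [[z /andP[exz]]|exy].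
  by rewrite walk0 => /eqP <-.
by exists y; rewrite exy walk0 eqxx.
Qed.

Lemma walk_cat a b x y z : walk a x y -> walk b y z -> walk (a + b) x z.
Proof.
elim: a x => [|a IH] x; first by rewrite walk0 => /eqP ->.
rewrite walkS addSn => /existsP[w /andP[exw wy]] yz.
by rewrite walkS; apply/existsP; exists w; rewrite exw (IH _ wy yz).
Qed.

Lemma walk_sym : symmetric e -> forall k x y, walk k x y -> walk k y x.
Proof.
move=> e_sym; elim=> [|k IH] x y; first by rewrite !walk0 eq_sym.
rewrite walkS -addn1 => /existsP[z /andP[exz zy]].
by apply: walk_cat (IH _ _ zy) _; rewrite walk1 e_sym.
Qed.

Lemma walk_connect k x y : walk k x y -> connect e x y.
Proof.
elim: k x => [|k IH] x; first by rewrite walk0 => /eqP ->.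
rewrite walkS => /existsP[z /andP[exz zy]].
exact: connect_trans (connect1 exz) (IH _ zy).
Qed.

Lemma walk_lipschitz (f : T -> nat) :
  (forall u v, e u v -> f u <= (f v).+1) ->
  forall k x y, walk k x y -> f x <= f y + k.
Proof.
move=> f_lip; elim=> [|k IH] x y; first by rewrite walk0 addn0 => /eqP ->.
rewrite walkS => /existsP[z /andP[/f_lip xz /IH zy]]; lia.
Qed.

Lemma dist_shortest d x y :
  walk d x y -> (forall k, k < d -> ~~ walk k x y) -> d < #|T| -> dist x y = d.
Proof.
move=> xy shorter ltdT; rewrite /Defs.dist -(subnKC (ltnW ltdT)) iotaD find_cat.
have -> : has (fun k => walk k x y) (iota 0 d) = false.
  by apply/hasPn => k; rewrite mem_iota => /andP[_ /shorter].
by rewrite size_iota -(subnSK ltdT) /= xy addn0.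
Qed.

Lemma dist_refl x : dist x x = 0.
Proof. by apply: dist_shortest; rewrite ?walk0 //; apply/card_gt0P; exists x. Qed.

Lemma dist_edge x y : e x y -> x != y -> dist x y = 1.
Proof.
move=> exy xy; apply: dist_shortest; first by rewrite walk1.
  by case=> // _; rewrite walk0.
by apply/card_gt1P; exists x, y.
Qed.

Lemma on_geodesic_end y z : on_geodesic e y z z.
Proof. by rewrite /on_geodesic dist_refl addn0. Qed.

End Walks.

Section Game.
Variables (T : finType) (e : rel T).
Implicit Types (M B : {set T}) (x y v : T).

Definition essential_pair x y :=
  forall S : {set T}, strong_resolving e S -> (x \in S) || (y \in S).

Lemma essential_pair_off_geodesics x y :
  x != y ->
  (forall z, z != x -> z != y -> ~~ on_geodesic e y z x && ~~ on_geodesic e x z y) ->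
  essential_pair x y.
Proof.
move=> xy off S /forallP/(_ x)/forallP/(_ y); rewrite xy /=.
case/existsP=> z /andP[zS]; apply: contraLR; rewrite negb_or => /andP[xS yS].
have zx : z != x by apply: contraNneq xS => <-.
have zy : z != y by apply: contraNneq yS => <-.
by rewrite negb_or; exact: off.
Qed.

Lemma maker_set_wins_subset M M' :
  M \subset M' -> maker_set_wins e M -> maker_set_wins e M'.
Proof.
move=> sMM' /existsP[S /andP[sSM srS]]; apply/existsP; exists S.
by rewrite srS (subset_trans sSM sMM').
Qed.

Lemma maker_set_loses M x y :
  essential_pair x y -> x \notin M -> y \notin M -> ~~ maker_set_wins e M.
Proof.
move=> xy xM yM; apply/existsP => -[S /andP[/subsetP sSM /xy]].
by case/orP=> /sSM; apply/negP.
Qed.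

Lemma maker_wins_set k M B t : maker_set_wins e M -> maker_wins e k M B t.
Proof.
elim: k M B t => [|k IH] M B t Mwins //=; case: ifP => // /set0Pn[v vF].
case: t; last by apply/forallP => w; apply/implyP => _; exact: IH.
apply/existsP; exists v; rewrite vF IH //.
by apply: maker_set_wins_subset Mwins; exact: subsetUr.
Qed.

Lemma maker_loses_pair k M B t x y :
  essential_pair x y -> x \in B -> y \in B -> x \notin M -> y \notin M ->
  ~~ maker_wins e k M B t.
Proof.
move=> xy; elim: k M B t => [|k IH] M B t xB yB xM yM /=.
  exact: maker_set_loses xy xM yM.
case: ifP => [_|/set0Pn[w wF]]; first exact: maker_set_loses xy xM yM.
case: t; last first.
  by rewrite negb_forall; apply/existsP; exists w; rewrite wF IH // !inE ?xB ?yB orbT.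
apply/existsP => -[v /andP[]]; rewrite !inE negb_or => /andP[_ vB]; apply/negP.
by apply: IH; rewrite // !inE negb_or ?xM ?yM andbT; apply: contraNneq vB => <-.
Qed.

Lemma free_set0Pn M B v : v \notin M :|: B -> ~: (M :|: B) != set0.
Proof. by move=> vF; apply/set0Pn; exists v; rewrite inE. Qed.

Lemma maker_wins_maker_turn k M B :
  ~: (M :|: B) != set0 ->
  maker_wins e k.+1 M B true = [exists v in ~: (M :|: B), maker_wins e k (v |: M) B false].
Proof. by move=> /negbTE /= ->. Qed.

Lemma maker_wins_breaker_turn k M B :
  ~: (M :|: B) != set0 ->
  maker_wins e k.+1 M B false = [forall v in ~: (M :|: B), maker_wins e k M (v |: B) true].
Proof. by move=> /negbTE /= ->. Qed.

Lemma maker_claims k M B v :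
  v \notin M :|: B -> maker_wins e k (v |: M) B false -> maker_wins e k.+1 M B true.
Proof.
move=> vF vWins; rewrite maker_wins_maker_turn ?(free_set0Pn vF) //.
by apply/existsP; exists v; rewrite inE vF.
Qed.

Lemma breaker_claims k M B v :
  v \notin M :|: B -> ~~ maker_wins e k M (v |: B) true -> ~~ maker_wins e k.+1 M B false.
Proof.
move=> vF vWins; rewrite maker_wins_breaker_turn ?(free_set0Pn vF) //.
by rewrite negb_forall; apply/existsP; exists v; rewrite inE vF.
Qed.

Lemma breaker_answers k M B w :
  w \notin M :|: B ->
  (forall v, v \notin M :|: B -> ~~ maker_wins e k (v |: M) B false) ->
  ~~ maker_wins e k.+1 M B true.
Proof.
move=> wF answer; rewrite maker_wins_maker_turn ?(free_set0Pn wF) //.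
by apply/existsP => -[v /andP[]]; rewrite inE => /answer/negP.
Qed.

Lemma maker_pairing k M B a b :
  a != b -> a \notin M :|: B -> b \notin M :|: B ->
  maker_set_wins e (a |: M) -> maker_set_wins e (b |: M) ->
  maker_wins e k.+2 M B false.
Proof.
move=> ab aF bF aWins bWins; rewrite maker_wins_breaker_turn ?(free_set0Pn aF) //.
apply/forallP => v; apply/implyP => _.
have reply c : c != v -> c \notin M :|: B -> maker_set_wins e (c |: M) ->
    maker_wins e k.+1 M (v |: B) true.
  move=> cv cF cWins; apply: (maker_claims (v := c)); last exact: maker_wins_set.
  by move: cF; rewrite !inE (negbTE cv).
case: (eqVneq v a) => [va|va]; last by apply: (reply a) => //; rewrite eq_sym.
by apply: (reply b) => //; rewrite va eq_sym.
Qed.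

Lemma breaker_pairing k M B x a b :
  a != b -> a \notin M :|: B -> b \notin M :|: B -> x \in B -> x \notin M ->
  essential_pair x a -> essential_pair x b ->
  ~~ maker_wins e k.+2 M B true.
Proof.
move=> ab aF bF xB xM xa xb; apply: (breaker_answers aF) => v vF.
have reply c : c != v -> c \notin M :|: B -> essential_pair x c ->
    ~~ maker_wins e k.+1 (v |: M) B false.
  move=> cv cF xc; apply: (breaker_claims (v := c)).
    by move: cF; rewrite !inE (negbTE cv).
  apply: (maker_loses_pair _ _ xc); rewrite !inE ?xB ?eqxx ?orbT // negb_or.
    by rewrite xM andbT; apply: contraNneq vF => <-; rewrite inE xB orbT.
  by move: cF; rewrite inE negb_or cv => /andP[].
case: (eqVneq v a) => [va|va]; last by apply: (reply a) => //; rewrite eq_sym.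
by apply: (reply b) => //; rewrite va eq_sym.
Qed.

Lemma exists_free M B : #|M| + #|B| < #|T| -> exists v, v \notin M :|: B.
Proof.
move=> small; have /card_gt0P[v vF] : 0 < #|~: (M :|: B)|.
  by move: small (leq_card_setU M B).1; rewrite -(cardsC (M :|: B)); lia.
by exists v; rewrite -in_setC.
Qed.

Lemma two_free M B : #|M| + #|B| + 2 <= #|T| ->
  exists a b, [/\ a \notin M :|: B, b \notin M :|: B & a != b].
Proof.
move=> small; have /card_gt1P[a [b [aF bF ab]]] : 1 < #|~: (M :|: B)|.
  by move: small (leq_card_setU M B).1; rewrite -(cardsC (M :|: B)); lia.
by exists a, b; rewrite -!in_setC.
Qed.

End Game.

Section LevelGraph.
Variables (T : finType) (f : T -> nat) (N : nat).

Definition level_graph : rel T := fun x y => ((f x).+1 == f y) || ((f y).+1 == f x).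

Lemma level_graph_sym : symmetric level_graph.
Proof. by move=> x y; rewrite /level_graph orbC. Qed.

Lemma level_graph_simple : simple_graph level_graph.
Proof. by split=> [|x]; [exact: level_graph_sym | rewrite /level_graph; lia]. Qed.

Hypothesis f_le : forall x, f x <= N.
Hypothesis f_onto : forall k, k <= N -> exists x, f x = k.

Local Notation walk := (walk_of_length level_graph).
Local Notation dist := (dist level_graph).

Lemma level_card : N < #|T|.
Proof.
rewrite cardT -(size_map f) -(size_iota 0 N.+1).
apply: uniq_leq_size (iota_uniq 0 N.+1) _ => k; rewrite mem_iota ltnS => /f_onto[x <-].
by apply: map_f; rewrite mem_enum.
Qed.

Lemma level_walk_up d x y : f y = f x + d.+1 -> walk d.+1 x y.
Proof.
elim: d x => [|d IH] x fy; first by rewrite walk1 /level_graph fy addn1 eqxx.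
have [z fz] : exists z, f z = (f x).+1 by apply: f_onto; have := f_le y; lia.
by rewrite walkS; apply/existsP; exists z; rewrite /level_graph fz eqxx IH //; lia.
Qed.

Lemma level_walk x y : f x != f y -> walk (f x - f y + (f y - f x)) x y.
Proof.
move=> fxy; wlog lt_xy : x y {fxy} / f x < f y => [wlog_lt|].
  case: (ltngtP (f x) (f y)) fxy => // [lt_xy|lt_yx] _; first exact: wlog_lt.
  by apply: walk_sym level_graph_sym _ _ _ _; rewrite addnC; apply: wlog_lt.
have -> : f x - f y + (f y - f x) = (f y - f x).-1.+1 by lia.
by apply: level_walk_up; lia.
Qed.

Lemma level_dist x y : f x != f y -> dist x y = f x - f y + (f y - f x).
Proof.
move=> fxy; apply: dist_shortest; first exact: level_walk.
  move=> k lt_k; apply/negP => xy.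
  have lip u v : level_graph u v -> f u <= (f v).+1 by rewrite /level_graph; lia.
  have := walk_lipschitz lip xy.
  have := walk_lipschitz lip (walk_sym level_graph_sym xy); lia.
by have := f_le x; have := f_le y; have := level_card; lia.
Qed.

Lemma level_neighbor x : 0 < N -> exists z, level_graph x z.
Proof.
move=> N_gt0; have [z fz] : exists z, f z = if f x < N then (f x).+1 else (f x).-1.
  by apply: f_onto; have := f_le x; case: ifP; lia.
by exists z; rewrite /level_graph fz; case: ifP; lia.
Qed.

Lemma level_dist_twins x y : 0 < N -> x != y -> f x = f y -> dist x y = 2.
Proof.
move=> N_gt0 xy fxy; have [z exz] := level_neighbor x N_gt0.
have ezy : level_graph z y by move: exz; rewrite /level_graph fxy orbC.
have [zx zy] : z != x /\ z != y.
  by split; apply/eqP => eq_z; move: exz; rewrite eq_z ?fxy /level_graph; lia.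
apply: dist_shortest.
- by rewrite walkS; apply/existsP; exists z; rewrite exz walk1.
- by case=> [|[|]] // _; rewrite ?walk0 ?walk1 ?xy // /level_graph fxy; lia.
rewrite cardT; apply: (@uniq_leq_size _ [:: x; y; z]) => [|u _]; last by rewrite mem_enum.
by rewrite /= !inE negb_or xy ![_ == z]eq_sym zx zy.
Qed.

Lemma level_dist_spec x y : 0 < N -> x != y ->
  (f x = f y /\ dist x y = 2) \/ (f x <> f y /\ dist x y = f x - f y + (f y - f x)).
Proof.
move=> N_gt0 xy; case: (eqVneq (f x) (f y)) => fxy; first by left; rewrite level_dist_twins.
by right; split; [apply/eqP | rewrite level_dist].
Qed.

Lemma level_connected : 0 < N -> connected_graph level_graph.
Proof.
move=> N_gt0 x y; case: (eqVneq (f x) (f y)) => fxy; last exact: walk_connect (level_walk fxy).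
have [z exz] := level_neighbor x N_gt0; apply: connect_trans (connect1 exz) (connect1 _).
by move: exz; rewrite /level_graph fxy orbC.
Qed.

Lemma level_strong_resolving (S : {set T}) l :
  l = 0 \/ l = N -> (forall x, f x = l -> x \in S) -> {in [predC S] &, injective f} ->
  strong_resolving level_graph S.
Proof.
move=> l_end S_l S_inj; have [z fz] : exists z, f z = l by apply: f_onto; lia.
apply/forallP => x; apply/forallP => y; apply/implyP => xy.
case xS: (x \in S); first by apply/existsP; exists x; rewrite xS on_geodesic_end.
case yS: (y \in S); first by apply/existsP; exists y; rewrite yS on_geodesic_end orbT.
have fxy : f x != f y by apply: contraNneq xy => fxy; apply/eqP/S_inj; rewrite ?inE ?xS ?yS.
have [fxz fyz] : f x != f z /\ f y != f z.
  by split; apply/eqP; rewrite fz => /S_l; rewrite ?xS ?yS.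
apply/existsP; exists z; rewrite S_l // /on_geodesic !level_dist;
  by have := f_le x; have := f_le y; lia.
Qed.

Lemma level_essential_ends x y : 1 < N -> f x = 0 -> f y = N ->
  essential_pair level_graph x y.
Proof.
move=> N_gt1 fx fy; have N_gt0 : 0 < N by lia.
have xy : x != y by apply/eqP => xy; move: fy; rewrite -xy fx; lia.
apply: essential_pair_off_geodesics => // z zx zy; rewrite /on_geodesic.
have [yx xz yz] : [/\ y != x, x != z & y != z] by split; rewrite eq_sym.
have := level_dist_spec N_gt0 xy; have := level_dist_spec N_gt0 yx.
have := level_dist_spec N_gt0 xz; have := level_dist_spec N_gt0 yz.
have := f_le z; lia.
Qed.

End LevelGraph.

Definition path_graph n : rel 'I_n := level_graph (@nat_of_ord n).
Arguments path_graph : clear implicits.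

Lemma path_graph_onto m k : k <= m -> exists i : 'I_m.+1, i = k :> nat.
Proof. by move=> k_le; exists (inord k); rewrite inordK. Qed.

Lemma path_graph_connected m : connected_graph (path_graph m.+2).
Proof. exact: level_connected (@leq_ord m.+1) (@path_graph_onto m.+1) _. Qed.

Lemma O_SR_path_graph m : O_SR (path_graph m.+2) = OutM.
Proof.
have end_wins (i : 'I_m.+2) (M : {set 'I_m.+2}) : i = 0 :> nat \/ i = m.+1 :> nat -> i \in M ->
    maker_set_wins (path_graph m.+2) M.
  move=> i_end iM; apply/existsP; exists [set i]; rewrite sub1set iM /=.
  apply: (level_strong_resolving (@leq_ord m.+1) (@path_graph_onto m.+1) i_end).
    by move=> x /val_inj ->; rewrite set11.
  by move=> x y _ _; exact: val_inj.
have Mgame : maker_wins_Mgame (path_graph m.+2).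
  rewrite /maker_wins_Mgame card_ord; apply: (maker_claims (v := ord0)); first by rewrite !inE.
  by apply: maker_wins_set; apply: end_wins (setU11 _ _); left.
have Bgame : maker_wins_Bgame (path_graph m.+2).
  rewrite /maker_wins_Bgame card_ord.
  apply: (maker_pairing _ (a := ord0) (b := ord_max)); rewrite ?inE //.
  - by apply: end_wins (setU11 _ _); left.
  - by apply: end_wins (setU11 _ _); right.
by rewrite /O_SR Mgame Bgame.
Qed.

(* The path 0 - 1 - ... - (n-2) with a second leaf n-1 attached to n-3. *)
Definition broom n : rel 'I_n := level_graph (fun i : 'I_n => minn i (n - 2)).
Arguments broom : clear implicits.

Lemma broom_le m (i : 'I_m.+2) : minn i (m.+2 - 2) <= m.
Proof. by rewrite subn2 geq_minr. Qed.

Lemma broom_onto m k : k <= m -> exists i : 'I_m.+2, minn i (m.+2 - 2) = k.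
Proof. by move=> k_le; exists (inord k); rewrite inordK; lia. Qed.

Lemma broom_connected m : connected_graph (broom m.+3).
Proof. exact: level_connected (@broom_le m.+1) (@broom_onto m.+1) _. Qed.

Lemma O_SR_broom m : O_SR (broom m.+4) = OutN.
Proof.
have le := @broom_le m.+2; have onto := @broom_onto m.+2.
pose a : 'I_m.+4 := inord m.+2; pose b : 'I_m.+4 := ord_max.
have [a_twin a0 b0 ab] : [/\ a = m.+2 :> nat, a != ord0, b != ord0 & a != b].
  by rewrite -!val_eqE /= inordK //; split=> //; lia.
have twin_wins (t : 'I_m.+4) (M : {set 'I_m.+4}) :
    m.+2 <= t -> ord0 \in M -> t \in M -> maker_set_wins (broom m.+4) M.
  move=> t_twin oM tM; apply/existsP; exists [set ord0; t].
  rewrite subUset !sub1set oM tM /=.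
  apply: (level_strong_resolving le onto (l := 0)) => [|x fx|x y]; first by left.
    by rewrite !inE; apply/orP; left; apply/eqP/val_inj => /=; lia.
  rewrite !inE !negb_or -!val_eqE /= => /andP[x0 xt] /andP[y0 yt] fxy.
  by apply: val_inj => /=; have := ltn_ord x; have := ltn_ord y; have := ltn_ord t; lia.
have Mgame : maker_wins_Mgame (broom m.+4).
  rewrite /maker_wins_Mgame card_ord; apply: (maker_claims (v := ord0)); first by rewrite !inE.
  apply: (maker_pairing _ (a := a) (b := b)); rewrite ?inE ?orbF ?a0 ?b0 //.
  - by apply: (twin_wins a); rewrite ?a_twin ?inE ?eqxx ?orbT.
  - by apply: (twin_wins b); rewrite ?inE ?eqxx ?orbT.
have Bgame : ~~ maker_wins_Bgame (broom m.+4).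
  rewrite /maker_wins_Bgame card_ord; apply: (breaker_claims (v := ord0)); first by rewrite !inE.
  apply: (breaker_pairing _ (x := ord0) (a := a) (b := b)); rewrite ?inE ?orbF ?a0 ?b0 //.
  - by apply: (level_essential_ends le onto) => //=; lia.
  - by apply: (level_essential_ends le onto) => //=; lia.
by rewrite /O_SR Mgame (negbTE Bgame).
Qed.

Definition complete_graph (T : finType) : rel T := fun x y => x != y.
Arguments complete_graph : clear implicits.

Lemma complete_graph_simple (T : finType) : simple_graph (complete_graph T).
Proof. by split=> [x y|x]; rewrite /complete_graph ?eqxx // eq_sym. Qed.

Lemma complete_graph_connected (T : finType) : connected_graph (complete_graph T).
Proof. by move=> x y; case: (eqVneq x y) => [->|xy]; [exact: connect0 | exact: connect1]. Qed.

Lemma complete_graph_dist (T : finType) (x y : T) :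
  x != y -> dist (complete_graph T) x y = 1.
Proof. by move=> xy; apply: dist_edge. Qed.

Lemma complete_graph_essential (T : finType) (x y : T) :
  x != y -> essential_pair (complete_graph T) x y.
Proof.
move=> xy; apply: essential_pair_off_geodesics => // z zx zy.
by rewrite /on_geodesic !complete_graph_dist //; rewrite eq_sym.
Qed.

Lemma O_SR_complete_graph (T : finType) : 3 < #|T| -> O_SR (complete_graph T) = OutB.
Proof.
move=> T_big.
have breaker_wins j (M : {set T}) w : #|M| <= 1 -> w \notin M ->
    ~~ maker_wins (complete_graph T) j.+2 M (w |: set0) true.
  move=> M_small wM; rewrite setU0.
  have [a [b [aF bF ab]]] : exists a b,
      [/\ a \notin M :|: [set w], b \notin M :|: [set w] & a != b].
    by apply: two_free; rewrite cards1; lia.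
  have w_ne c : c \notin M :|: [set w] -> w != c.
    by apply: contraNneq => <-; rewrite !inE eqxx orbT.
  apply: (breaker_pairing _ (x := w) (a := a) (b := b)); rewrite ?set11 //;
    exact/complete_graph_essential/w_ne.
have [v0 v0F] : exists v0 : T, v0 \notin set0 :|: set0 by apply: exists_free; rewrite !cards0; lia.
have Mgame : ~~ maker_wins_Mgame (complete_graph T).
  rewrite /maker_wins_Mgame -(subnKC T_big); apply: (breaker_answers v0F) => v _.
  have [w wF] : exists w, w \notin (v |: set0) :|: set0.
    by apply: exists_free; rewrite setU0 cards1 cards0; lia.
  apply: (breaker_claims wF); apply: breaker_wins; first by rewrite setU0 cards1.
  by move: wF; rewrite setU0.
have Bgame : ~~ maker_wins_Bgame (complete_graph T).
  rewrite /maker_wins_Bgame -(subnKC T_big); apply: (breaker_claims v0F).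
  by apply: breaker_wins; rewrite ?cards0 ?inE.
by rewrite /O_SR (negbTE Mgame) (negbTE Bgame).
Qed.

Unset Implicit Arguments.

Theorem mainTheorem4 (n : nat) (hn : 4 <= n) :
  (exists e1 : rel 'I_n, simple_graph e1 /\ connected_graph e1 /\ O_SR e1 = OutM) /\
  (exists e2 : rel 'I_n, simple_graph e2 /\ connected_graph e2 /\ O_SR e2 = OutN) /\
  (exists e3 : rel 'I_n, simple_graph e3 /\ connected_graph e3 /\ O_SR e3 = OutB).
Proof.
case: n hn => [|[|[|[|m]]]] // _; split; [|split].
- exists (path_graph m.+4); split; first exact: level_graph_simple.
  by split; [exact: path_graph_connected | exact: O_SR_path_graph].
- exists (broom m.+4); split; first exact: level_graph_simple.
  by split; [exact: broom_connected | exact: O_SR_broom].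
- exists (complete_graph 'I_m.+4); split; first exact: complete_graph_simple.
  by split; [exact: complete_graph_connected | apply: O_SR_complete_graph; rewrite card_ord].
Qed.
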